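(* Let $(G,D,\star)$ be any probabilistic metric space where $\star$ is a continuous triangle function, and let $\mathbb D:\Pi(G)\times\Pi(G)\to\Delta^+$ be $\mathbb D(f,g)=\sup_{x\in G}f(x)\star g(x)$. Then: (1) $\mathbb D(\delta_a,\delta_b)=D(a,b)$ for all $a,b\in G$; (2) $(\Pi(G),\mathbb D,\star)$ is a complete probabilistic metric space; (3) $\delta(G)=\{\delta_a:a\in G\}$ is dense in $(\Pi(G),\mathbb D,\star)$, i.e. for every $f\in\Pi(G)$ there is a sequence $(a_n)\subset G$ with $\mathbb D(\delta_{a_n},f)\xrightarrow{w}\mathcal H_0$.
   Context: A distribution function is a nondecreasing, left-continuous function $F:[-\infty,+\infty]\to[0,1]$ with $F(-\infty)=0$, $F(+\infty)=1$; $\Delta^+$ is the set of distribution functions with $F(0)=0$, ordered pointwise (a complete lattice with maximum $\mathcal H_0$, $\mathcal H_0(t)=0$ for $t\le0$, $1$ for $t>0$). A triangle function is a binary operation $\star$ on $\Delta^+$ that is commutative, associative, nondecreasing in each argument, with $F\star\mathcal H_0=F$. $F_n\xrightarrow{w}F$ means $F_n(t)\to F(t)$ at every continuity point $t\in\mathbb R$ of $F$; $\star$ is continuous if $F_n\star L_n\xrightarrow{w}F\star L$ whenever $F_n\xrightarrow{w}F$, $L_n\xrightarrow{w}L$. A probabilistic metric space $(G,D,\star)$ consists of a set $G$, a triangle function $\star$ and $D:G\times G\to\Delta^+$ with (i) $D(p,q)=\mathcal H_0$ iff $p=q$; (ii) $D(p,q)=D(q,p)$; (iii) $D(p,q)\star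 D(q,r)\le D(p,r)$. A sequence $(z_n)$ is Cauchy if $D(z_n,z_p)\xrightarrow{w}\mathcal H_0$ as $n,p\to\infty$; the space is complete if for every Cauchy sequence $(z_n)$ there is $z\in G$ with $D(z_n,z)\xrightarrow{w}\mathcal H_0$. A map $f:G\to\Delta^+$ is probabilistic $1$-Lipschitz if $D(x,y)\star f(y)\le f(x)$ for all $x,y$. $\delta_a(y)=D(y,a)$. $\Pi(G)$ is the set of probabilistic $1$-Lipschitz maps $f$ for which there is a Cauchy sequence $(a_n)\subset G$ with $D(a_n,x)\xrightarrow{w}f(x)$ for all $x\in G$. *)

From Stdlib Require Import Reals Classical ClassicalEpsilon FunctionalExtensionality.
Open Scope R_scope.

(* A distribution function F on [-oo,+oo] is represented by its restriction
   to R (the values F(-oo)=0, F(+oo)=1 are fixed by convention). *)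
Definition dfun := R -> R.

Definition inDplus (F : dfun) : Prop :=
  (forall t, 0 <= F t <= 1) /\
  (forall s t, s <= t -> F s <= F t) /\
  (forall t eps, 0 < eps -> exists d, 0 < d /\
      forall s, t - d < s < t -> Rabs (F s - F t) < eps) /\
  F 0 = 0.

Definition ledf (F L : dfun) : Prop := forall t, F t <= L t.

Definition H0 : dfun := fun t => if Rle_dec t 0 then 0 else 1.

Definition triangle_function (star : dfun -> dfun -> dfun) : Prop :=
  (forall F L, inDplus F -> inDplus L -> inDplus (star F L)) /\
  (forall F L, inDplus F -> inDplus L -> star F L = star L F) /\
  (forall F L K, inDplus F -> inDplus L -> inDplus K ->
      star F (star L K) = star (star F L) K) /\
  (forall F F' L, inDplus F -> inDplus F' -> inDplus L -> ledf F F' ->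
      ledf (star F L) (star F' L)) /\
  (forall F, inDplus F -> star F H0 = F).

Definition wconv (Fn : nat -> dfun) (F : dfun) : Prop :=
  forall t, continuity_pt F t -> Un_cv (fun n => Fn n t) (F t).

Definition wconv2 (Fnp : nat -> nat -> dfun) (F : dfun) : Prop :=
  forall t, continuity_pt F t ->
    forall eps, 0 < eps -> exists N : nat, forall n p : nat, (n >= N)%nat -> (p >= N)%nat ->
      Rabs (Fnp n p t - F t) < eps.

Definition continuous_tf (star : dfun -> dfun -> dfun) : Prop :=
  forall (Fn Ln : nat -> dfun) (F L : dfun),
    (forall n, inDplus (Fn n)) -> (forall n, inDplus (Ln n)) -> inDplus F -> inDplus L ->
    wconv Fn F -> wconv Ln L -> wconv (fun n => star (Fn n) (Ln n)) (star F L).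

Definition PM_space {T : Type} (P : T -> Prop) (D : T -> T -> dfun)
  (star : dfun -> dfun -> dfun) : Prop :=
  (forall p q, P p -> P q -> inDplus (D p q)) /\
  (forall p q, P p -> P q -> (D p q = H0 <-> p = q)) /\
  (forall p q, P p -> P q -> D p q = D q p) /\
  (forall p q r, P p -> P q -> P r -> ledf (star (D p q) (D q r)) (D p r)).

Definition cauchy {T : Type} (D : T -> T -> dfun) (z : nat -> T) : Prop :=
  wconv2 (fun n p => D (z n) (z p)) H0.

Definition complete {T : Type} (P : T -> Prop) (D : T -> T -> dfun) : Prop :=
  forall z : nat -> T, (forall n, P (z n)) -> cauchy D z ->
    exists w, P w /\ wconv (fun n => D (z n) w) H0.

Definition delta {G : Type} (D : G -> G -> dfun) (a : G) : G -> dfun :=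
  fun y => D y a.

Definition InPi {G : Type} (D : G -> G -> dfun) (star : dfun -> dfun -> dfun)
  (f : G -> dfun) : Prop :=
  (forall x, inDplus (f x)) /\
  (forall x y, ledf (star (D x y) (f y)) (f x)) /\
  (exists a : nat -> G, cauchy D a /\ forall x, wconv (fun n => D (a n) x) (f x)).

Definition is_supD (S : dfun -> Prop) (F : dfun) : Prop :=
  inDplus F /\ (forall H, S H -> ledf H F) /\
  (forall U, inDplus U -> (forall H, S H -> ledf H U) -> ledf F U).

Definition supD (S : dfun -> Prop) : dfun :=
  epsilon (inhabits H0) (is_supD S).

Definition DD {G : Type} (star : dfun -> dfun -> dfun) (f g : G -> dfun) : dfun :=
  supD (fun H => exists x : G, H = star (f x) (g x)).

From Stdlib Require Import Reals Lra Lia.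
From Stdlib Require Import Classical ClassicalEpsilon FunctionalExtensionality PropExtensionality.
Open Scope R_scope.

(* Everything is read off at continuity points of distribution functions, which are dense
   because they are monotone.  Continuity of [star] at [H0] is used in a form uniform in the
   other argument: [X s - eta <= (X * E) t] for [s < t] once [E] is close enough to [H0].

   For a probabilistic 1-Lipschitz [f] the supremum defining DD(delta_c, f) is attained at [c],
   so DD(delta_c, f) = f(c); this gives (1), and (3) reduces to f(a_n) -> H0 along the Cauchy
   sequence defining [f].  If [g] is the limit of delta along (b_n), then f(b_n) -> DD(f, g)
   weakly; the separation and triangle axioms of (2) follow by letting [n] tend to infinity.
   For completeness, pick c_k with z_k(c_k) close to H0: then DD(z_k, delta_{c_k}) -> H0,
   so (c_k) is Cauchy in G, and its limit in Pi(G) is the limit of (z_k). *)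

Lemma Dplus_bounded F : inDplus F -> forall t, 0 <= F t <= 1.
Proof. intros [H _]; exact H. Qed.

Lemma Dplus_nondecr F : inDplus F -> forall s t, s <= t -> F s <= F t.
Proof. intros [_ [H _]]; exact H. Qed.

Lemma Dplus_left_cont F : inDplus F -> forall t eps, 0 < eps ->
  exists d, 0 < d /\ forall s, t - d < s < t -> Rabs (F s - F t) < eps.
Proof. intros [_ [_ [H _]]]; exact H. Qed.

Lemma Dplus_nonpos F : inDplus F -> forall t, t <= 0 -> F t = 0.
Proof.
  intros HF t Ht.
  pose proof (Dplus_nondecr F HF t 0 Ht); pose proof (Dplus_bounded F HF t).
  destruct HF as [_ [_ [_ HF0]]]; lra.
Qed.

Lemma H0_pos t : 0 < t -> H0 t = 1.
Proof. intros Ht; unfold H0; destruct (Rle_dec t 0); lra. Qed.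

Lemma H0_nonpos t : t <= 0 -> H0 t = 0.
Proof. intros Ht; unfold H0; destruct (Rle_dec t 0); lra. Qed.

Definition step (c s : R) : dfun := fun u => if Rle_dec u s then 0 else c.

Lemma step_inDplus c s : 0 <= c <= 1 -> 0 <= s -> inDplus (step c s).
Proof.
  intros Hc Hs; unfold step; split; [|split; [|split]].
  - intros t; destruct (Rle_dec t s); lra.
  - intros u v Huv; destruct (Rle_dec u s), (Rle_dec v s); lra.
  - intros t e He; destruct (Rle_dec t s).
    + exists 1; split; [lra|]; intros u Hu.
      destruct (Rle_dec u s); [|lra]; rewrite Rminus_0_r, Rabs_R0; lra.
    + exists (t - s); split; [lra|]; intros u Hu.
      destruct (Rle_dec u s); [lra|]; rewrite Rminus_diag, Rabs_R0; lra.
  - destruct (Rle_dec 0 s); lra.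
Qed.

Lemma H0_inDplus : inDplus H0.
Proof.
  replace H0 with (step 1 0) by reflexivity.
  apply step_inDplus; lra.
Qed.

Lemma ledf_H0 F : inDplus F -> ledf F H0.
Proof.
  intros HF t; destruct (Rle_dec t 0).
  - rewrite H0_nonpos, Dplus_nonpos; auto; lra.
  - rewrite H0_pos by lra; apply Dplus_bounded; auto.
Qed.

Lemma continuity_pt_elim F t : continuity_pt F t -> forall eps, 0 < eps ->
  exists a, 0 < a /\ forall x, Rabs (x - t) < a -> Rabs (F x - F t) < eps.
Proof.
  intros H eps He; destruct (H eps He) as [a [Ha Hx]]; exists a; split; auto.
  intros x Hxt; destruct (Req_dec x t) as [->|Hne].
  - rewrite Rminus_diag, Rabs_R0; lra.
  - apply (Hx x); repeat split; auto.
Qed.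

Lemma continuity_pt_intro F t : (forall eps, 0 < eps ->
  exists a, 0 < a /\ forall x, Rabs (x - t) < a -> Rabs (F x - F t) < eps) ->
  continuity_pt F t.
Proof.
  intros H eps He; destruct (H eps He) as [a [Ha Hx]]; exists a; split; auto.
  intros x [_ Hxt]; apply Hx, Hxt.
Qed.

Lemma continuity_pt_locally_const F t d : 0 < d ->
  (forall x, Rabs (x - t) < d -> F x = F t) -> continuity_pt F t.
Proof.
  intros Hd H; apply continuity_pt_intro; intros eps He; exists d; split; auto.
  intros x Hx; rewrite H by auto; rewrite Rminus_diag, Rabs_R0; lra.
Qed.

Lemma strict_nested_intervals (L U : nat -> R) :
  (forall n, L n < L (S n)) -> (forall n, U (S n) < U n) -> (forall n, L n < U n) ->
  exists c, forall n, L n < c < U n.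
Proof.
  intros HL HU HLU.
  assert (Hmono : forall n k, L n <= L (n + k)%nat /\ U (n + k)%nat <= U n).
  { intros n k; induction k as [|k IH]; rewrite ?Nat.add_0_r, ?Nat.add_succ_r; [lra|].
    specialize (HL (n + k)%nat); specialize (HU (n + k)%nat); lra. }
  assert (HLU' : forall m n, L m <= U n).
  { intros m n; destruct (Nat.le_ge_cases m n) as [Hmn|Hnm].
    - destruct (Hmono m (n - m)%nat) as [H1 _]; replace (m + (n - m))%nat with n in H1 by lia.
      specialize (HLU n); lra.
    - destruct (Hmono n (m - n)%nat) as [_ H2]; replace (n + (m - n))%nat with m in H2 by lia.
      specialize (HLU m); lra. }
  destruct (completeness (fun x => exists n, x = L n)) as [c [Hub Hleast]].
  - exists (U O); intros x [n ->]; apply HLU'.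
  - exists (L O), O; reflexivity.
  - exists c; intros n; split.
    + apply Rlt_le_trans with (L (S n)); [apply HL|apply Hub; eexists; reflexivity].
    + apply Rle_lt_trans with (U (S n)); [|apply HU].
      apply Hleast; intros x [m ->]; apply HLU'.
Qed.

Section ContinuityPoints.

Variable F : R -> R.
Hypothesis F_nondecr : forall s t, s <= t -> F s <= F t.
Hypothesis F_bounded : forall t, 0 <= F t <= 1.

(* Of the two middle quarters of [l, r], keep the one on which [F] increases less: the
   increase is at least halved, and the nested intervals stay away from each other's ends. *)
Definition quarter_step (p : R * R) : R * R :=
  let (l, r) := p in let h := (r - l) / 4 in
  if Rle_dec (F (l + 2 * h) - F (l + h)) (F (l + 3 * h) - F (l + 2 * h))
  then (l + h, l + 2 * h) else (l + 2 * h, l + 3 * h).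

Lemma quarter_step_spec p : fst p < snd p ->
  let q := quarter_step p in
  fst p < fst q /\ fst q < snd q /\ snd q < snd p /\
  F (snd q) - F (fst q) <= (F (snd p) - F (fst p)) / 2.
Proof.
  destruct p as [l r]; simpl; intros Hlr; unfold quarter_step; set (h := (r - l) / 4).
  assert (A1 := F_nondecr l (l + h)); assert (A2 := F_nondecr (l + 3 * h) r).
  assert (A3 := F_nondecr (l + h) (l + 2 * h)); assert (A4 := F_nondecr (l + 2 * h) (l + 3 * h)).
  destruct (Rle_dec _ _); simpl; unfold h in *; repeat split; lra.
Qed.

Fixpoint quarter_nest (a b : R) (n : nat) : R * R :=
  match n with O => (a, b) | S n => quarter_step (quarter_nest a b n) end.

Lemma quarter_nest_spec a b n : a < b ->
  fst (quarter_nest a b n) < snd (quarter_nest a b n) /\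
  F (snd (quarter_nest a b n)) - F (fst (quarter_nest a b n)) <= (/ 2) ^ n.
Proof.
  intros Hab; induction n as [|n [IH1 IH2]]; cbn [quarter_nest pow fst snd].
  - pose proof (F_bounded a); pose proof (F_bounded b); lra.
  - pose proof (quarter_step_spec _ IH1) as Hq; cbv zeta in Hq; lra.
Qed.

Lemma nondecr_continuity_point a b : a < b -> exists c, a < c < b /\ continuity_pt F c.
Proof.
  intros Hab.
  set (L n := fst (quarter_nest a b n)); set (U n := snd (quarter_nest a b n)).
  assert (Hspec : forall n, L n < L (S n) /\ U (S n) < U n /\ L n < U n /\
                           F (U n) - F (L n) <= (/ 2) ^ n).
  { intros n; destruct (quarter_nest_spec a b n Hab) as [H1 H2].
    pose proof (quarter_step_spec _ H1) as Hq; cbv zeta in Hq.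
    unfold L, U; cbn [quarter_nest]; lra. }
  destruct (strict_nested_intervals L U) as [c Hc]; try (intros n; apply Hspec).
  exists c; split.
  { specialize (Hc O); unfold L, U in Hc; simpl in Hc; lra. }
  apply continuity_pt_intro; intros eps He.
  destruct (pow_lt_1_zero (/ 2) ltac:(rewrite Rabs_pos_eq; lra) eps He) as [N HN].
  specialize (HN N (Nat.le_refl N)); rewrite Rabs_pos_eq in HN by (apply pow_le; lra).
  destruct (Hspec N) as [_ [_ [_ Hosc]]]; destruct (Hc N) as [HLc HcU].
  exists (Rmin (c - L N) (U N - c)); split; [apply Rmin_pos; lra|].
  intros x Hx; apply Rabs_def2 in Hx.
  pose proof (Rmin_l (c - L N) (U N - c)); pose proof (Rmin_r (c - L N) (U N - c)).
  pose proof (F_nondecr (L N) x); pose proof (F_nondecr x (U N)).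
  pose proof (F_nondecr (L N) c); pose proof (F_nondecr c (U N)).
  apply Rabs_def1; lra.
Qed.

End ContinuityPoints.

Lemma Dplus_continuity_point F : inDplus F -> forall a b, a < b ->
  exists c, a < c < b /\ continuity_pt F c.
Proof.
  intros HF; apply nondecr_continuity_point; [apply Dplus_nondecr|apply Dplus_bounded]; auto.
Qed.

Lemma Un_cv_eventually_gt u l v : Un_cv u l -> v < l -> exists N, forall n, (n >= N)%nat -> v < u n.
Proof.
  intros Hu Hv; destruct (Hu (l - v)) as [N HN]; [lra|]; exists N; intros n Hn.
  specialize (HN n Hn); unfold Rdist in HN; apply Rabs_def2 in HN; lra.
Qed.

Lemma Un_cv_ge u l v : Un_cv u l -> (exists N, forall n, (n >= N)%nat -> v <= u n) -> v <= l.
Proof.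
  intros Hu [N HN]; apply Rnot_lt_le; intros Hlt.
  destruct (Hu (v - l)) as [M HM]; [lra|].
  specialize (HM (max N M) ltac:(lia)); specialize (HN (max N M) ltac:(lia)).
  unfold Rdist in HM; apply Rabs_def2 in HM; lra.
Qed.

Lemma wconv_const F : wconv (fun _ => F) F.
Proof. intros t _ e He; exists O; intros; unfold Rdist; rewrite Rminus_diag, Rabs_R0; lra. Qed.

(* The order is tested at a continuity point of [F] just left of [t] and a continuity point
   of [G] between it and [t]. *)
Lemma wconv_le Fn Gn F G : (forall n, inDplus (Gn n)) -> inDplus F -> inDplus G ->
  wconv Fn F -> wconv Gn G -> (forall n, ledf (Fn n) (Gn n)) -> ledf F G.
Proof.
  intros HGn HF HG HFn HGn' Hle t; apply Rnot_lt_le; intros Hlt.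
  destruct (Dplus_left_cont F HF t ((F t - G t) / 2)) as [d [Hd Hleft]]; [lra|].
  destruct (Dplus_continuity_point F HF (t - d) t) as [s [Hs HFs]]; [lra|].
  destruct (Dplus_continuity_point G HG s t) as [s' [Hs' HGs']]; [lra|].
  assert (F s <= G s').
  { apply (Rle_cv_lim (Un := fun n => Fn n s) (Vn := fun n => Gn n s'));
      [|apply HFn|apply HGn']; auto.
    intros n; apply Rle_trans with (Gn n s); [apply Hle|apply Dplus_nondecr; auto; lra]. }
  specialize (Hleft s Hs); apply Rabs_def2 in Hleft.
  pose proof (Dplus_nondecr G HG s' t); lra.
Qed.

Lemma wconv_ge_eventually X F : (forall n, inDplus (X n)) -> inDplus F -> wconv X F ->
  forall s t v, s < t -> (exists N, forall n, (n >= N)%nat -> v <= X n s) -> v <= F t.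
Proof.
  intros HX HF HXF s t v Hst [N HN].
  destruct (Dplus_continuity_point F HF s t Hst) as [c [Hc HFc]].
  apply Rle_trans with (F c); [|apply Dplus_nondecr; auto; lra].
  apply (Un_cv_ge _ _ _ (HXF c HFc)); exists N; intros n Hn.
  apply Rle_trans with (X n s); [auto|apply Dplus_nondecr; auto; lra].
Qed.

Lemma wconv_squeeze X F : inDplus F ->
  (forall s t eta, s < t -> 0 < eta ->
     exists N, forall n, (n >= N)%nat -> F s - eta <= X n t) ->
  (forall s t eta, s < t -> 0 < eta ->
     exists N, forall n, (n >= N)%nat -> X n s <= F t + eta) ->
  wconv X F.
Proof.
  intros HF Hlow Hup t Ht e He.
  destruct (continuity_pt_elim F t Ht (e / 3)) as [a [Ha Hnear]]; [lra|].
  pose proof (Hnear (t - a / 2)) as A1; pose proof (Hnear (t + a / 2)) as A2.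
  replace (t - a / 2 - t) with (- (a / 2)) in A1 by ring.
  replace (t + a / 2 - t) with (a / 2) in A2 by ring.
  rewrite Rabs_Ropp, Rabs_pos_eq in A1 by lra; rewrite Rabs_pos_eq in A2 by lra.
  specialize (A1 ltac:(lra)); specialize (A2 ltac:(lra)).
  apply Rabs_def2 in A1; apply Rabs_def2 in A2.
  destruct (Hlow (t - a / 2) t (e / 3)) as [N1 H1]; try lra.
  destruct (Hup t (t + a / 2) (e / 3)) as [N2 H2]; try lra.
  exists (max N1 N2); intros n Hn.
  specialize (H1 n ltac:(lia)); specialize (H2 n ltac:(lia)).
  unfold Rdist; apply Rabs_def1; lra.
Qed.

(* The neighbourhoods of [H0] for the modified Lévy distance. *)
Definition nearH0 (e : R) (F : dfun) : Prop := 1 - e < F e.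

Lemma nearH0_weaken F e e' : inDplus F -> e <= e' -> nearH0 e F -> nearH0 e' F.
Proof. unfold nearH0; intros HF He H; pose proof (Dplus_nondecr F HF e e' He); lra. Qed.

Lemma nearH0_ledf F G e : ledf F G -> nearH0 e F -> nearH0 e G.
Proof. unfold nearH0; intros HFG H; specialize (HFG e); lra. Qed.

Lemma nearH0_at F e t : inDplus F -> e <= t -> nearH0 e F -> 1 - e < F t.
Proof. unfold nearH0; intros HF Het H; pose proof (Dplus_nondecr F HF e t Het); lra. Qed.

Lemma H0_continuity_pt t : 0 < t -> continuity_pt H0 t.
Proof.
  intros Ht; apply (continuity_pt_locally_const _ _ t Ht); intros x Hx; apply Rabs_def2 in Hx.
  rewrite !H0_pos by lra; reflexivity.
Qed.

Lemma close_H0_nearH0 F e : 0 < e -> Rabs (F e - H0 e) < e -> nearH0 e F.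
Proof. intros He H; rewrite H0_pos in H by lra; apply Rabs_def2 in H; unfold nearH0; lra. Qed.

Lemma nearH0_close_H0 F t eps : inDplus F -> 0 < eps ->
  (0 < t -> nearH0 (Rmin t eps) F) -> Rabs (F t - H0 t) < eps.
Proof.
  intros HF He H; destruct (Rle_dec t 0) as [Ht|Ht].
  - rewrite H0_nonpos, (Dplus_nonpos F HF t Ht), Rminus_0_r, Rabs_R0; auto.
  - assert (Hm : 0 < Rmin t eps) by (apply Rmin_pos; lra).
    pose proof (nearH0_at _ _ t HF (Rmin_l t eps) (H ltac:(lra))).
    pose proof (Rmin_r t eps); pose proof (Dplus_bounded _ HF t).
    rewrite H0_pos by lra; apply Rabs_def1; lra.
Qed.

Lemma wconv_H0_iff Fn : (forall n, inDplus (Fn n)) ->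
  wconv Fn H0 <-> forall e, 0 < e -> exists N, forall n, (n >= N)%nat -> nearH0 e (Fn n).
Proof.
  intros HFn; split.
  - intros H e He; destruct (H e (H0_continuity_pt e He) e He) as [N HN].
    exists N; intros n Hn; apply close_H0_nearH0, HN; auto.
  - intros H t _ eps He; destruct (Rle_dec t 0) as [Ht|Ht].
    + exists O; intros n _; apply nearH0_close_H0; auto; lra.
    + destruct (H (Rmin t eps)) as [N HN]; [apply Rmin_pos; lra|].
      exists N; intros n Hn; apply nearH0_close_H0; auto.
Qed.

Lemma wconv2_H0_iff Fnp : (forall n p, inDplus (Fnp n p)) ->
  wconv2 Fnp H0 <-> forall e, 0 < e ->
    exists N, forall n p, (n >= N)%nat -> (p >= N)%nat -> nearH0 e (Fnp n p).
Proof.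
  intros HF; split.
  - intros H e He; destruct (H e (H0_continuity_pt e He) e He) as [N HN].
    exists N; intros n p Hn Hp; apply close_H0_nearH0, HN; auto.
  - intros H t _ eps He; destruct (Rle_dec t 0) as [Ht|Ht].
    + exists O; intros n p _ _; apply nearH0_close_H0; auto; lra.
    + destruct (H (Rmin t eps)) as [N HN]; [apply Rmin_pos; lra|].
      exists N; intros n p Hn Hp; apply nearH0_close_H0; auto.
Qed.

Lemma nearH0_all_eq_H0 F : inDplus F -> (forall e, 0 < e -> nearH0 e F) -> F = H0.
Proof.
  intros HF H; apply functional_extensionality; intros t.
  apply Rle_antisym; [apply ledf_H0; auto|].
  destruct (Rle_dec t 0) as [Ht|Ht]; [rewrite H0_nonpos by auto; apply Dplus_bounded; auto|].
  rewrite H0_pos by lra; apply Rnot_lt_le; intros Hlt.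
  assert (Hm : 0 < Rmin t (1 - F t)) by (apply Rmin_pos; lra).
  pose proof (nearH0_at F _ t HF (Rmin_l _ _) (H _ Hm)); pose proof (Rmin_r t (1 - F t)); lra.
Qed.

Lemma wconv_H0_of_nearH0_inv Fn : (forall n, inDplus (Fn n)) ->
  (forall n, nearH0 (/ INR (S n)) (Fn n)) -> wconv Fn H0.
Proof.
  intros HFn H; apply wconv_H0_iff; auto; intros e He.
  destruct (archimed_cor1 e He) as [N [HN HN0]]; exists N; intros n Hn.
  apply (nearH0_weaken _ (/ INR (S n))); auto.
  apply Rle_trans with (/ INR N); [|lra].
  apply Rinv_le_contravar; [apply lt_0_INR; lia|apply le_INR; lia].
Qed.

Section PointwiseSupremum.

Variable S : dfun -> Prop.
Hypothesis S_Dplus : forall H, S H -> inDplus H.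

(* [0] is thrown in so that the set of values is inhabited even when [S] is empty. *)
Let values t v := v = 0 \/ exists H, S H /\ v = H t.

Lemma values_bound t : bound (values t).
Proof. exists 1; intros v [->|[H [HS ->]]]; [lra|apply Dplus_bounded; auto]. Qed.

Definition psup (t : R) : R :=
  proj1_sig (completeness (values t) (values_bound t) (ex_intro _ 0 (or_introl eq_refl))).

Lemma psup_lub t : is_lub (values t) (psup t).
Proof. unfold psup; destruct completeness; auto. Qed.

Lemma psup_ge H t : S H -> H t <= psup t.
Proof. intros HS; apply (psup_lub t); right; eauto. Qed.

Lemma psup_ge0 t : 0 <= psup t.
Proof. apply (psup_lub t); left; auto. Qed.

Lemma psup_le t b : 0 <= b -> (forall H, S H -> H t <= b) -> psup t <= b.
Proof. intros Hb Hub; apply (psup_lub t); intros v [->|[H [HS ->]]]; auto. Qed.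

Lemma psup_approx t e : 0 < e -> psup t < e \/ exists H, S H /\ psup t - e < H t.
Proof.
  intros He; destruct (Rlt_dec (psup t) e) as [Hlt|Hge]; [left; auto|right].
  apply not_all_not_ex; intros Hn.
  assert (psup t <= psup t - e); [|lra].
  apply (psup_lub t); intros v [->|[H [HS ->]]]; [lra|].
  apply Rnot_lt_le; intros Hv; apply (Hn H); auto.
Qed.

Lemma psup_nondecr s t : s <= t -> psup s <= psup t.
Proof.
  intros Hst; apply psup_le; [apply psup_ge0|]; intros H HS.
  apply Rle_trans with (H t); [apply Dplus_nondecr; auto|apply psup_ge; auto].
Qed.

Lemma psup_is_supD : is_supD S psup.
Proof.
  split; [split; [|split; [|split]]|split].
  - intros t; split; [apply psup_ge0|].
    apply psup_le; [lra|]; intros H HS; apply Dplus_bounded; auto.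
  - exact psup_nondecr.
  - intros t e He; destruct (psup_approx t (e / 2)) as [Hsmall|[H [HS HH]]]; [lra| |].
    + exists 1; split; [lra|]; intros s Hs.
      pose proof (psup_nondecr s t); pose proof (psup_ge0 s); apply Rabs_def1; lra.
    + destruct (Dplus_left_cont H (S_Dplus H HS) t (e / 2)) as [d [Hd Hleft]]; [lra|].
      exists d; split; auto; intros s Hs; specialize (Hleft s Hs); apply Rabs_def2 in Hleft.
      pose proof (psup_nondecr s t); pose proof (psup_ge H s HS); apply Rabs_def1; lra.
  - apply Rle_antisym; [|apply psup_ge0].
    apply psup_le; [lra|]; intros H HS; destruct (S_Dplus H HS) as [_ [_ [_ ->]]]; lra.
  - intros H HS t; apply psup_ge; auto.
  - intros U HU Hub t; apply psup_le; [apply Dplus_bounded; auto|]; intros H HS; apply Hub; auto.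
Qed.

Lemma supD_is_supD : is_supD S (supD S).
Proof. unfold supD; apply epsilon_spec; exists psup; apply psup_is_supD. Qed.

Lemma supD_unique F : is_supD S F -> supD S = F.
Proof.
  intros [HF [Hub Hleast]]; destruct supD_is_supD as [HF' [Hub' Hleast']].
  apply functional_extensionality; intros t; apply Rle_antisym; [apply Hleast'|apply Hleast]; auto.
Qed.

Lemma supD_inDplus : inDplus (supD S).
Proof. apply supD_is_supD. Qed.

Lemma supD_ge H : S H -> ledf H (supD S).
Proof. apply supD_is_supD. Qed.

Lemma supD_approx t e : 0 < e -> supD S t < e \/ exists H, S H /\ supD S t - e < H t.
Proof. rewrite (supD_unique psup psup_is_supD); apply psup_approx. Qed.

End PointwiseSupremum.

(* The limit is the supremum of all steps lying eventually below the sequence. *)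
Lemma wconv_of_cauchy_like X : (forall n, inDplus (X n)) ->
  (forall s t eta, s < t -> 0 < eta ->
     exists N, forall n m, (n >= N)%nat -> (m >= N)%nat -> X m s <= X n t + eta) ->
  exists F, inDplus F /\ wconv X F.
Proof.
  intros HX Hcauchy.
  set (below H := exists r u, 0 <= r <= 1 /\ 0 <= u /\
                    (exists N, forall n, (n >= N)%nat -> r <= X n u) /\ H = step r u).
  assert (Hbelow : forall H, below H -> inDplus H).
  { intros H (r & u & Hr & Hu & _ & ->); apply step_inDplus; auto. }
  set (F := supD below); assert (HF : inDplus F) by apply supD_inDplus, Hbelow.
  exists F; split; auto; apply wconv_squeeze; auto.
  - intros s t eta Hst Heta.
    destruct (supD_approx below Hbelow s eta Heta) as [Hsmall|[H [Hb HH]]].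
    { exists O; intros n _; pose proof (Dplus_bounded _ (HX n) t); fold F in Hsmall; lra. }
    destruct Hb as (r & u & Hr & Hu & [N HN] & ->); exists N; intros n Hn.
    fold F in HH; unfold step in HH; destruct (Rle_dec s u).
    + pose proof (Dplus_bounded _ (HX n) t); lra.
    + pose proof (HN n Hn); pose proof (Dplus_nondecr _ (HX n) u t); lra.
  - intros s t eta Hst Heta.
    destruct (Hcauchy s ((s + t) / 2) eta) as [N HN]; [lra|auto|].
    exists N; intros m Hm; pose proof (Dplus_bounded F HF t).
    destruct (Rle_dec s 0) as [Hs|Hs]; [rewrite Dplus_nonpos by auto; lra|].
    destruct (Rle_dec (X m s - eta) 0) as [Hr|Hr]; [lra|].
    assert (Hstep : below (step (X m s - eta) ((s + t) / 2))).
    { exists (X m s - eta), ((s + t) / 2); repeat split; try lra.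
      - pose proof (Dplus_bounded _ (HX m) s); lra.
      - exists N; intros n Hn; specialize (HN n m Hn Hm); lra. }
    pose proof (supD_ge below Hbelow _ Hstep t) as Hle; fold F in Hle.
    unfold step in Hle; destruct (Rle_dec t ((s + t) / 2)); lra.
Qed.

Section TriangleFunction.

Variable star : dfun -> dfun -> dfun.
Hypothesis Htf : triangle_function star.

Lemma star_inDplus F L : inDplus F -> inDplus L -> inDplus (star F L).
Proof. apply Htf. Qed.

Lemma star_comm F L : inDplus F -> inDplus L -> star F L = star L F.
Proof. apply Htf. Qed.

Lemma star_assoc F L K : inDplus F -> inDplus L -> inDplus K ->
  star F (star L K) = star (star F L) K.
Proof. apply Htf. Qed.

Lemma star_monol F F' L : inDplus F -> inDplus F' -> inDplus L ->
  ledf F F' -> ledf (star F L) (star F' L).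
Proof. apply Htf. Qed.

Lemma star_H0r F : inDplus F -> star F H0 = F.
Proof. apply Htf. Qed.

Lemma star_H0l F : inDplus F -> star H0 F = F.
Proof. intros HF; rewrite star_comm by (auto using H0_inDplus); apply star_H0r; auto. Qed.

Hypothesis Hcont : continuous_tf star.

Lemma star_wconv_l Y En E : inDplus Y -> (forall n, inDplus (En n)) -> inDplus E ->
  wconv En E -> wconv (fun n => star Y (En n)) (star Y E).
Proof. intros; apply Hcont; auto using wconv_const. Qed.

(* Otherwise a sequence of counterexamples [E k] tends to [H0], while [star Y (E k)] stays
   away from [star Y H0 = Y] at the continuity point [t]. *)
Lemma star_nearH0_at Y t : inDplus Y -> continuity_pt Y t -> forall eta, 0 < eta ->
  exists d, 0 < d /\ forall E, inDplus E -> nearH0 d E -> Y t - eta < star Y E t.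
Proof.
  intros HY HYt eta Heta; apply NNPP; intros Hno.
  assert (Hbad : forall k, exists E,
             inDplus E /\ nearH0 (/ INR (S k)) E /\ star Y E t <= Y t - eta).
  { intros k; apply NNPP; intros Hk; apply Hno; exists (/ INR (S k)).
    split; [apply Rinv_0_lt_compat, lt_0_INR; lia|]; intros E HE HEd.
    apply Rnot_le_lt; intros Hle; apply Hk; eauto. }
  destruct (choice _ Hbad) as [En HEn].
  assert (HEn_in : forall k, inDplus (En k)) by apply HEn.
  assert (HEn_H0 : wconv En H0) by (apply wconv_H0_of_nearH0_inv; auto; apply HEn).
  pose proof (star_wconv_l Y En H0 HY HEn_in H0_inDplus HEn_H0 t) as Hcv.
  rewrite star_H0r in Hcv by auto.
  destruct (Un_cv_eventually_gt _ _ (Y t - eta) (Hcv HYt)) as [N HN]; [lra|].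
  specialize (HN N (Nat.le_refl N)); destruct (HEn N) as (_ & _ & HNle); simpl in HN; lra.
Qed.

Lemma common_radius (P : nat -> R -> Prop) M :
  (forall j d d', 0 < d' <= d -> P j d -> P j d') ->
  (forall j, (j <= M)%nat -> exists d, 0 < d /\ P j d) ->
  exists d, 0 < d /\ forall j, (j <= M)%nat -> P j d.
Proof.
  intros Hmono; induction M as [|M IH]; intros H.
  - destruct (H O (Nat.le_refl O)) as [d [Hd HP]]; exists d; split; auto.
    intros j Hj; replace j with O by lia; auto.
  - destruct IH as [d1 [Hd1 HP1]]; [intros j Hj; apply H; lia|].
    destruct (H (S M) (Nat.le_refl _)) as [d2 [Hd2 HP2]].
    exists (Rmin d1 d2); split; [apply Rmin_pos; auto|]; intros j Hj.
    destruct (Nat.eq_dec j (S M)) as [->|Hne].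
    + apply (Hmono _ d2); auto; split; [apply Rmin_pos; auto|apply Rmin_r].
    + apply (Hmono _ d1); [split; [apply Rmin_pos; auto|apply Rmin_l]|apply HP1; lia].
Qed.

Lemma grid_floor c h M : 0 <= c -> 0 < h -> c < INR (S M) * h ->
  exists j, (j <= M)%nat /\ INR j * h <= c < INR j * h + h.
Proof.
  intros Hc Hh; induction M as [|M IH]; intros HM.
  - exists O; split; auto; change (INR 1) with 1 in HM; change (INR 0) with 0; lra.
  - destruct (Rlt_dec c (INR (S M) * h)) as [Hlt|Hge].
    + destruct (IH Hlt) as [j [Hj Hjc]]; exists j; split; auto.
    + exists (S M); split; auto.
      rewrite (S_INR (S M)), Rmult_plus_distr_r, Rmult_1_l in HM; lra.
Qed.

(* Uniformity in [X] comes from comparing [X] with one of finitely many steps below it. *)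
Lemma star_nearH0_uniform s t eta : s < t -> 0 < eta ->
  exists d, 0 < d /\ forall X E, inDplus X -> inDplus E -> nearH0 d E -> X s - eta <= star X E t.
Proof.
  intros Hst Heta; destruct (Rlt_dec s 0) as [Hs|Hs].
  { exists 1; split; [lra|]; intros X E HX HE _.
    rewrite (Dplus_nonpos X HX s) by lra.
    pose proof (Dplus_bounded _ (star_inDplus X E HX HE) t); lra. }
  destruct (archimed_cor1 (eta / 2)) as [M [HM HM0]]; [lra|].
  set (h := / INR M); assert (HMpos : 0 < INR M) by (apply lt_0_INR; lia).
  assert (Hh : 0 < h) by (apply Rinv_0_lt_compat; auto).
  assert (HMh : INR M * h = 1) by (unfold h; field; lra).
  assert (Hgrid : forall j, (j <= M)%nat -> 0 <= INR j * h <= 1).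
  { intros j Hj; split; [apply Rmult_le_pos; [apply pos_INR|lra]|rewrite <- HMh].
    apply Rmult_le_compat_r; [lra|apply le_INR; auto]. }
  destruct (common_radius (fun j d => forall E, inDplus E -> nearH0 d E ->
              INR j * h - eta / 2 < star (step (INR j * h) s) E t) M) as [d [Hd Hstep]].
  - intros j d d' Hd' HP E HE HEd'; apply HP; auto; apply (nearH0_weaken _ d'); auto; lra.
  - intros j Hj.
    assert (Hcont_t : continuity_pt (step (INR j * h) s) t).
    { apply (continuity_pt_locally_const _ _ (t - s)); [lra|]; intros x Hx; apply Rabs_def2 in Hx.
      unfold step; destruct (Rle_dec x s), (Rle_dec t s); lra. }
    destruct (star_nearH0_at _ t (step_inDplus _ s (Hgrid j Hj) ltac:(lra)) Hcont_t (eta / 2))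
      as [d [Hd HP]]; [lra|].
    assert (Hval : step (INR j * h) s t = INR j * h) by (unfold step; destruct (Rle_dec t s); lra).
    exists d; split; auto; intros E HE HEd; specialize (HP E HE HEd); rewrite Hval in HP; exact HP.
  - exists d; split; auto; intros X E HX HE HEd.
    destruct (grid_floor (X s) h M) as [j [Hj Hjc]]; try (apply Dplus_bounded; auto); auto.
    { rewrite S_INR, Rmult_plus_distr_r, HMh; pose proof (Dplus_bounded _ HX s); lra. }
    assert (Hle : ledf (step (INR j * h) s) X).
    { intros u; unfold step; destruct (Rle_dec u s); [apply Dplus_bounded; auto|].
      pose proof (Dplus_nondecr _ HX s u); lra. }
    pose proof (star_monol _ _ E (step_inDplus _ s (Hgrid j Hj) ltac:(lra)) HX HE Hle t).
    specialize (Hstep j Hj E HE HEd); unfold h in *; lra.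
Qed.

Lemma star_nearH0 e : 0 < e -> exists d, 0 < d /\
  forall X E, inDplus X -> inDplus E -> nearH0 d X -> nearH0 d E -> nearH0 e (star X E).
Proof.
  intros He; destruct (star_nearH0_uniform (e / 2) e (e / 2)) as [d [Hd Hunif]]; try lra.
  exists (Rmin d (e / 2)); split; [apply Rmin_pos; lra|]; intros X E HX HE HXd HEd.
  pose proof (Rmin_l d (e / 2)); pose proof (Rmin_r d (e / 2)).
  pose proof (nearH0_at X (Rmin d (e / 2)) (e / 2) HX ltac:(lra) HXd).
  pose proof (Hunif X E HX HE (nearH0_weaken E (Rmin d (e / 2)) d HE ltac:(lra) HEd)).
  unfold nearH0; lra.
Qed.

End TriangleFunction.

Section ProbabilisticMetricSpace.

Variables (T : Type) (P : T -> Prop) (Dist : T -> T -> dfun) (star : dfun -> dfun -> dfun).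
Hypotheses (Htf : triangle_function star) (Hcont : continuous_tf star)
           (HPM : PM_space P Dist star).

Lemma PM_inDplus p q : P p -> P q -> inDplus (Dist p q).
Proof. apply HPM. Qed.

Lemma PM_sym p q : P p -> P q -> Dist p q = Dist q p.
Proof. apply HPM. Qed.

Lemma PM_triangle p q r : P p -> P q -> P r -> ledf (star (Dist p q) (Dist q r)) (Dist p r).
Proof. apply HPM. Qed.

Lemma PM_nearH0_triangle e : 0 < e -> exists d, 0 < d /\ forall p q r, P p -> P q -> P r ->
  nearH0 d (Dist p q) -> nearH0 d (Dist q r) -> nearH0 e (Dist p r).
Proof.
  intros He; destruct (star_nearH0 star Htf Hcont e He) as [d [Hd Hnear]].
  exists d; split; auto; intros p q r Hp Hq Hr Hpq Hqr.
  apply (nearH0_ledf (star (Dist p q) (Dist q r))); [apply PM_triangle; auto|].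
  apply Hnear; auto using PM_inDplus.
Qed.

Lemma PM_limit_of_close z w f : (forall n, P (z n)) -> (forall n, P (w n)) -> P f ->
  wconv (fun n => Dist (z n) (w n)) H0 -> wconv (fun n => Dist (w n) f) H0 ->
  wconv (fun n => Dist (z n) f) H0.
Proof.
  intros Hz Hw Hf Hzw Hwf; rewrite wconv_H0_iff in * by auto using PM_inDplus.
  intros e He; destruct (PM_nearH0_triangle e He) as [d [Hd Htri]].
  destruct (Hzw d Hd) as [N1 H1]; destruct (Hwf d Hd) as [N2 H2].
  exists (max N1 N2); intros n Hn; apply (Htri _ (w n)); auto; [apply H1|apply H2]; lia.
Qed.

Lemma PM_cauchy_of_close z w : (forall n, P (z n)) -> (forall n, P (w n)) ->
  cauchy Dist z -> wconv (fun n => Dist (z n) (w n)) H0 -> cauchy Dist w.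
Proof.
  intros Hz Hw Hcz Hzw; unfold cauchy in *.
  rewrite wconv2_H0_iff in * by auto using PM_inDplus.
  rewrite wconv_H0_iff in Hzw by auto using PM_inDplus.
  intros e He; destruct (PM_nearH0_triangle e He) as [d1 [Hd1 Htri1]].
  destruct (PM_nearH0_triangle d1 Hd1) as [d2 [Hd2 Htri2]].
  assert (Hd : 0 < Rmin d1 d2) by (apply Rmin_pos; auto).
  destruct (Hcz d2 Hd2) as [N1 H1]; destruct (Hzw _ Hd) as [N2 H2].
  exists (max N1 N2); intros n p Hn Hp.
  assert (Hclose : forall k, (k >= N2)%nat ->
            nearH0 d1 (Dist (w k) (z k)) /\ nearH0 d2 (Dist (z k) (w k))).
  { intros k Hk; specialize (H2 k Hk); rewrite (PM_sym (w k)) by auto.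
    split; apply (nearH0_weaken _ (Rmin d1 d2)); auto using PM_inDplus, Rmin_l, Rmin_r. }
  apply (Htri1 _ (z n)); auto; [apply Hclose; lia|].
  apply (Htri2 _ (z p)); auto; [apply H1|apply Hclose]; lia.
Qed.

End ProbabilisticMetricSpace.

Section Completion.

Variables (G : Type) (D : G -> G -> dfun) (star : dfun -> dfun -> dfun).
Hypotheses (Htf : triangle_function star) (Hcont : continuous_tf star)
           (HPM : PM_space (fun _ : G => True) D star).

Lemma D_inDplus x y : inDplus (D x y).
Proof. apply HPM; auto. Qed.

Lemma D_refl x : D x x = H0.
Proof. apply (proj1 (proj2 HPM) x x I I); reflexivity. Qed.

Lemma D_sym x y : D x y = D y x.
Proof. apply HPM; auto. Qed.

Lemma D_triangle x y z : ledf (star (D x y) (D y z)) (D x z).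
Proof. apply HPM; auto. Qed.

Definition lipschitz1 (f : G -> dfun) : Prop := forall x y, ledf (star (D x y) (f y)) (f x).

Definition limit_of (f : G -> dfun) (a : nat -> G) : Prop :=
  cauchy D a /\ forall x, wconv (fun n => D (a n) x) (f x).

Section Limit.

Variables (f : G -> dfun) (a : nat -> G).
Hypotheses (Hf : forall x, inDplus (f x)) (Ha : limit_of f a).

Lemma limit_of_at_seq : wconv (fun n => f (a n)) H0.
Proof.
  destruct Ha as [Hcauchy Hconv]; apply wconv_H0_iff; auto; intros e He.
  unfold cauchy in Hcauchy; rewrite wconv2_H0_iff in Hcauchy by auto using D_inDplus.
  destruct (Hcauchy (e / 2)) as [N HN]; [lra|]; exists N; intros n Hn.
  assert (1 - e / 2 <= f (a n) e); [|unfold nearH0; lra].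
  apply (wconv_ge_eventually (fun m => D (a m) (a n)) _ (fun m => D_inDplus _ _) (Hf _)
           (Hconv (a n)) (e / 2)); [lra|].
  exists N; intros m Hm; left; apply HN; auto.
Qed.

Lemma limit_of_star_le x y : ledf (star (f x) (f y)) (D x y).
Proof.
  destruct Ha as [_ Hconv].
  apply (wconv_le (fun n => star (D (a n) x) (D (a n) y)) (fun _ => D x y));
    auto using star_inDplus, D_inDplus, wconv_const.
  intros n; rewrite (D_sym (a n) x); apply D_triangle.
Qed.

End Limit.

Let family (f g : G -> dfun) (H : dfun) : Prop := exists x, H = star (f x) (g x).

Section Distance.

Variables (f g : G -> dfun).
Hypotheses (Hf : forall x, inDplus (f x)) (Hg : forall x, inDplus (g x)).

Let family_inDplus H : family f g H -> inDplus H.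
Proof. intros [x ->]; apply star_inDplus; auto. Qed.

Lemma DD_inDplus : inDplus (DD star f g).
Proof. apply supD_inDplus, family_inDplus. Qed.

Lemma DD_ge x : ledf (star (f x) (g x)) (DD star f g).
Proof. apply supD_ge; [apply family_inDplus|exists x; reflexivity]. Qed.

Lemma DD_approx t e : 0 < e ->
  DD star f g t < e \/ exists x, DD star f g t - e < star (f x) (g x) t.
Proof.
  intros He; destruct (supD_approx _ family_inDplus t e He) as [Hsmall|[H [[x ->] Hx]]].
  - left; exact Hsmall.
  - right; exists x; exact Hx.
Qed.

End Distance.

Lemma DD_sym (f g : G -> dfun) : (forall x, inDplus (f x)) -> (forall x, inDplus (g x)) ->
  DD star f g = DD star g f.
Proof.
  intros Hf Hg; unfold DD; f_equal; apply functional_extensionality; intros H.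
  apply propositional_extensionality; split; intros [x ->]; exists x; apply star_comm; auto.
Qed.

Section Lipschitz.

Variables (f g : G -> dfun) (b : nat -> G).
Hypotheses (Hf : forall x, inDplus (f x)) (Hlip : lipschitz1 f)
           (Hg : forall x, inDplus (g x)) (Hb : limit_of g b).

Lemma DD_at_limit_seq : wconv (fun n => f (b n)) (DD star f g).
Proof.
  assert (Hgb : wconv (fun n => g (b n)) H0) by (apply limit_of_at_seq; auto).
  apply wconv_squeeze; [apply DD_inDplus; auto| |].
  - intros s t eta Hst Heta; destruct (DD_approx f g Hf Hg s eta Heta) as [Hsmall|[x Hx]].
    { exists O; intros n _; pose proof (Dplus_bounded _ (Hf (b n)) t); lra. }
    assert (HK : inDplus (star (f x) (g x))) by (apply star_inDplus; auto).
    destruct (Dplus_continuity_point _ HK s t Hst) as [u [Hu HKu]].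
    pose proof (star_wconv_l star Hcont (f x) (fun n => D (b n) x) (g x)) as Hcv.
    destruct (Un_cv_eventually_gt _ _ (DD star f g s - eta)
                (Hcv (Hf x) (fun n => D_inDplus _ _) (Hg x) (proj2 Hb x) u HKu)) as [N HN].
    { pose proof (Dplus_nondecr _ HK s u); lra. }
    exists N; intros n Hn; specialize (HN n Hn).
    rewrite star_comm in HN by auto using D_inDplus.
    pose proof (Hlip (b n) x u); pose proof (Dplus_nondecr _ (Hf (b n)) u t); lra.
  - intros s t eta Hst Heta.
    destruct (star_nearH0_uniform star Htf Hcont s t eta Hst Heta) as [d [Hd Hunif]].
    rewrite wconv_H0_iff in Hgb by auto; destruct (Hgb d Hd) as [N HN].
    exists N; intros n Hn; pose proof (Hunif _ _ (Hf (b n)) (Hg (b n)) (HN n Hn)).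
    pose proof (DD_ge f g Hf Hg (b n) t); lra.
Qed.

(* For [y := b n], [g x * (f y * g y) = (g x * g y) * f y <= D x y * f y <= f x]. *)
Lemma DD_lipschitz x : ledf (star (g x) (DD star f g)) (f x).
Proof.
  assert (HDD : inDplus (DD star f g)) by (apply DD_inDplus; auto).
  assert (Hfg : wconv (fun n => star (f (b n)) (g (b n))) (DD star f g)).
  { rewrite <- (star_H0r star Htf (DD star f g)) by auto.
    apply Hcont; auto using H0_inDplus, DD_at_limit_seq, limit_of_at_seq. }
  apply (wconv_le (fun n => star (g x) (star (f (b n)) (g (b n)))) (fun _ => f x));
    auto using star_inDplus, wconv_const, star_wconv_l.
  intros n; set (y := b n).
  rewrite (star_comm star Htf (f y)), star_assoc by auto using star_inDplus.
  intros t; apply Rle_trans with (star (D x y) (f y) t); [|apply Hlip].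
  apply star_monol; auto using star_inDplus, D_inDplus.
  apply (limit_of_star_le g b); auto.
Qed.

End Lipschitz.

Lemma DD_delta_l (f : G -> dfun) c : (forall x, inDplus (f x)) -> lipschitz1 f ->
  DD star (delta D c) f = f c.
Proof.
  intros Hf Hlip; apply supD_unique.
  { intros H [x ->]; apply star_inDplus; unfold delta; auto using D_inDplus. }
  split; [auto|split].
  - intros H [x ->]; unfold delta; rewrite D_sym; apply Hlip.
  - intros U _ Hub; specialize (Hub _ (ex_intro _ c eq_refl)).
    unfold delta in Hub; rewrite D_refl, star_H0l in Hub; auto.
Qed.

Lemma delta_lipschitz b : lipschitz1 (delta D b).
Proof. intros x y; apply D_triangle. Qed.

Lemma delta_InPi b : InPi D star (delta D b).
Proof.
  split; [|split]; [intros; apply D_inDplus|apply delta_lipschitz|].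
  exists (fun _ => b); split.
  - intros t Ht e He; exists O; intros; rewrite D_refl, Rminus_diag, Rabs_R0; lra.
  - intros x; unfold delta; rewrite D_sym; apply wconv_const.
Qed.

Lemma cauchy_limit_of c : cauchy D c ->
  exists f, (forall x, inDplus (f x)) /\ lipschitz1 f /\ limit_of f c.
Proof.
  intros Hc.
  assert (Hlim : forall x, exists F, inDplus F /\ wconv (fun n => D (c n) x) F).
  { intros x; apply wconv_of_cauchy_like; [intros; apply D_inDplus|].
    intros s t eta Hst Heta.
    destruct (star_nearH0_uniform star Htf Hcont s t eta Hst Heta) as [d [Hd Hunif]].
    unfold cauchy in Hc; rewrite wconv2_H0_iff in Hc by auto using D_inDplus.
    destruct (Hc d Hd) as [N HN]; exists N; intros n m Hn Hm.
    pose proof (Hunif (D (c m) x) _ (D_inDplus _ _) (D_inDplus _ _) (HN n m Hn Hm)).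
    rewrite star_comm in H by auto using D_inDplus.
    pose proof (D_triangle (c n) (c m) x t); lra. }
  destruct (choice _ Hlim) as [f Hf]; exists f.
  assert (Hfin : forall x, inDplus (f x)) by apply Hf.
  split; [|split]; auto; [|split; [auto|apply Hf]].
  intros x y; apply (wconv_le (fun n => star (D x y) (D (c n) y)) (fun n => D (c n) x));
    auto using star_inDplus, D_inDplus.
  - apply star_wconv_l; auto using D_inDplus; apply Hf.
  - apply Hf.
  - intros n; rewrite star_comm, (D_sym x y) by auto using D_inDplus; apply D_triangle.
Qed.

Lemma DD_delta_delta a b : DD star (delta D a) (delta D b) = D a b.
Proof. exact (DD_delta_l (delta D b) a (fun x => D_inDplus x b) (delta_lipschitz b)). Qed.

Lemma DD_delta_limit_seq f a : (forall x, inDplus (f x)) -> lipschitz1 f -> limit_of f a ->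
  wconv (fun n => DD star (delta D (a n)) f) H0.
Proof.
  intros Hf Hlip Ha.
  replace (fun n => DD star (delta D (a n)) f) with (fun n => f (a n)).
  - apply limit_of_at_seq; auto.
  - apply functional_extensionality; intros n; symmetry; apply DD_delta_l; auto.
Qed.

Lemma DD_self f : InPi D star f -> DD star f f = H0.
Proof.
  intros (Hf & _ & a & Ha); apply nearH0_all_eq_H0; [apply DD_inDplus; auto|intros e He].
  destruct (star_nearH0 star Htf Hcont e He) as [d [Hd Hnear]].
  pose proof (limit_of_at_seq f a Hf Ha) as Hfa; rewrite wconv_H0_iff in Hfa by auto.
  destruct (Hfa d Hd) as [N HN].
  apply (nearH0_ledf _ _ _ (DD_ge f f Hf Hf (a N))); apply Hnear; auto.
Qed.

Lemma DD_eq_H0 f g : InPi D star f -> InPi D star g -> DD star f g = H0 -> f = g.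
Proof.
  intros (Hf & Hflip & a & Ha) (Hg & Hglip & b & Hb) Hfg.
  assert (Hgf : DD star g f = H0) by (rewrite DD_sym; auto).
  apply functional_extensionality; intros x; apply functional_extensionality; intros t.
  pose proof (DD_lipschitz f g b Hf Hflip Hg Hb x t) as Hle1.
  pose proof (DD_lipschitz g f a Hg Hglip Hf Ha x t) as Hle2.
  rewrite Hfg, star_H0r in Hle1 by auto; rewrite Hgf, star_H0r in Hle2 by auto; lra.
Qed.

Lemma DD_triangle f g h : InPi D star f -> InPi D star g -> InPi D star h ->
  ledf (star (DD star f g) (DD star g h)) (DD star f h).
Proof.
  intros (Hf & Hflip & _) (Hg & _ & b & Hb) (Hh & Hhlip & _).
  apply (wconv_le (fun n => star (f (b n)) (h (b n))) (fun _ => DD star f h));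
    auto using star_inDplus, DD_inDplus, wconv_const, DD_ge.
  apply Hcont; auto using DD_inDplus, DD_at_limit_seq.
  rewrite (DD_sym g h) by auto; apply DD_at_limit_seq; auto.
Qed.

Lemma Pi_PM_space : PM_space (InPi D star) (DD star) star.
Proof.
  split; [|split; [|split]].
  - intros f g Hf Hg; apply DD_inDplus; [apply Hf|apply Hg].
  - intros f g Hf Hg; split; [apply DD_eq_H0; auto|intros <-; apply DD_self; auto].
  - intros f g Hf Hg; apply DD_sym; [apply Hf|apply Hg].
  - intros f g h; apply DD_triangle.
Qed.

Lemma Pi_complete : complete (InPi D star) (DD star).
Proof.
  intros z Hz Hcz.
  assert (Hpick : forall k, exists c, nearH0 (/ INR (S k)) (z k c)).
  { intros k; destruct (Hz k) as (Hin & _ & a & Ha).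
    pose proof (limit_of_at_seq _ a Hin Ha) as Hza; rewrite wconv_H0_iff in Hza by auto.
    destruct (Hza (/ INR (S k))) as [N HN]; [apply Rinv_0_lt_compat, lt_0_INR; lia|].
    exists (a N); apply HN; lia. }
  destruct (choice _ Hpick) as [c Hc].
  assert (Hclose : wconv (fun k => DD star (z k) (delta D (c k))) H0).
  { apply wconv_H0_of_nearH0_inv.
    - intros k; apply DD_inDplus; [apply Hz|intros; apply D_inDplus].
    - intros k; destruct (Hz k) as (Hin & Hlip & _).
      rewrite DD_sym, DD_delta_l by (auto; intros; apply D_inDplus); apply Hc. }
  assert (Hcw : cauchy (DD star) (fun k => delta D (c k))).
  { apply (PM_cauchy_of_close _ (InPi D star) _ star Htf Hcont Pi_PM_space z);
      auto using delta_InPi. }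
  assert (Hcc : cauchy D c).
  { intros t Ht e He; destruct (Hcw t Ht e He) as [N HN]; exists N; intros n p Hn Hp.
    rewrite <- DD_delta_delta; apply HN; auto. }
  destruct (cauchy_limit_of c Hcc) as (f & Hf & Hflip & Hfc).
  exists f; split; [split; [|split]; eauto|].
  apply (PM_limit_of_close _ (InPi D star) _ star Htf Hcont Pi_PM_space z
           (fun k => delta D (c k))); auto using delta_InPi.
  - split; [|split]; eauto.
  - apply DD_delta_limit_seq; auto.
Qed.

End Completion.

Theorem mainTheorem11 (G : Type) (D : G -> G -> dfun) (star : dfun -> dfun -> dfun)
  (Htf : triangle_function star) (Hcont : continuous_tf star)
  (HPM : PM_space (fun _ : G => True) D star) :
  (forall a b : G, DD star (delta D a) (delta D b) = D a b) /\
  PM_space (InPi D star) (DD star) star /\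
  complete (InPi D star) (DD star) /\
  (forall f, InPi D star f ->
     exists a : nat -> G, wconv (fun n => DD star (delta D (a n)) f) H0).
Proof.
  split; [|split; [|split]].
  - apply DD_delta_delta; auto.
  - apply Pi_PM_space; auto.
  - apply Pi_complete; auto.
  - intros f (Hf & Hflip & a & Ha); exists a; apply DD_delta_limit_seq; auto.
Qed.
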